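(* Let $\alpha_1,\alpha_2\in\mathbb{C}\setminus\mathbb{R}$ with $\operatorname{Im}\alpha_1/\operatorname{Im}\alpha_2\in\mathbb{Q}$, written as the irreducible fraction $p/q$ ($p\in\mathbb{Z}\setminus\{0\}$, $q\in\mathbb{N}$). For $m\in\mathbb{Z}$ let $\ell_m=\{\lambda\in\mathbb{C}: \operatorname{Im}\lambda=m\operatorname{Im}\alpha_2/q\}$. Then $\mathcal{M}_2\subset\bigcup_{m\in\mathbb{Z}}\ell_m$, and: (i) if $q\operatorname{Re}\alpha_1-p\operatorname{Re}\alpha_2=\tilde p/\tilde q$ is rational (irreducible, $\tilde q\in\mathbb{N}$, with $\tilde p=0,\tilde q=1$ if it vanishes), then $\mathcal{N}_2=\tilde q^{-1}\mathbb{Z}$ and for every $m\in\mathbb{Z}$, $\ell_m\cap\mathcal{M}_2$ is a discrete countable subset of $\ell_m$; (ii) if $q\operatorname{Re}\alpha_1-p\operatorname{Re}\alpha_2\in\mathbb{R}\setminus\mathbb{Q}$, then $\mathcal{N}_2$ is a dense $\mathcal{G}_\delta$ subset of $\mathbb{R}$ and for every $m\in\mathbb{Z}$, $\ell_m\cap\mathcal{M}_2$ is a dense $\mathcal{G}_\delta$ subset of $\ell_m$.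
   Context: $\mathbb{T}^n=\mathbb{R}^n/2\pi\mathbb{Z}^n$; $D_t=-i\partial_t$ etc. A linear differential operator $P$ on $\mathbb{T}^n$ is globally hypoelliptic (GH) if $u\in\mathcal{D}'(\mathbb{T}^n)$ and $Pu\in\mathcal{C}^\infty(\mathbb{T}^n)$ imply $u\in\mathcal{C}^\infty(\mathbb{T}^n)$. Here $L_2=D_t+\alpha_1D_x+\alpha_2D_y$ on $\mathbb{T}^3_{(t,x,y)}$, $\mathcal{M}_2=\{\lambda\in\mathbb{C}: L_2-\lambda\text{ is not GH on }\mathbb{T}^3\}$ and $\mathcal{N}_2=\mathcal{M}_2\cap\mathbb{R}$. *)

From Stdlib Require Import Reals ZArith.
From Coquelicot Require Import Coquelicot.
Open Scope R_scope.

(** Frequencies on T^3 = R^3/(2 pi Z)^3: k = (tau, xi, eta) in Z^3. *)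
Definition Z3 : Type := (Z * Z * Z)%type.

Definition knorm (k : Z3) : R :=
  let '(a, b, c) := k in 1 + Rabs (IZR a) + Rabs (IZR b) + Rabs (IZR c).

(** Distributions on T^3, in their Fourier picture: families of Fourier
    coefficients of at most polynomial growth. *)
Definition temperate (u : Z3 -> C) : Prop :=
  exists (K : R) (N : nat), forall k, Cmod (u k) <= K * knorm k ^ N.

(** Smooth functions on T^3, in their Fourier picture: rapidly decreasing
    families of Fourier coefficients. *)
Definition rapid (u : Z3 -> C) : Prop :=
  forall N : nat, exists K : R, forall k, Cmod (u k) * knorm k ^ N <= K.

(** Symbol of L_2 - lambda = D_t + a1 D_x + a2 D_y - lambda:
    on e^{i(t tau + x xi + y eta)} it acts by multiplication by this. *)
Definition symbolL2 (a1 a2 lam : C) (k : Z3) : C :=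
  let '(t, x, y) := k in
  (RtoC (IZR t) + a1 * RtoC (IZR x) + a2 * RtoC (IZR y) - lam)%C.

Definition GH_L2 (a1 a2 lam : C) : Prop :=
  forall u : Z3 -> C, temperate u ->
    rapid (fun k => (symbolL2 a1 a2 lam k * u k)%C) -> rapid u.

Definition M2 (a1 a2 : C) (lam : C) : Prop := ~ GH_L2 a1 a2 lam.
Definition N2 (a1 a2 : C) (r : R) : Prop := M2 a1 a2 (RtoC r).

Definition line_l (a2 : C) (q m : Z) (lam : C) : Prop :=
  Im lam = IZR m * Im a2 / IZR q.

Definition R_open (U : R -> Prop) : Prop :=
  forall x, U x -> exists e, 0 < e /\ forall y, Rabs (y - x) < e -> U y.
Definition R_dense (S : R -> Prop) : Prop :=
  forall x e, 0 < e -> exists y, S y /\ Rabs (y - x) < e.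
Definition R_Gdelta (S : R -> Prop) : Prop :=
  exists U : nat -> R -> Prop, (forall n, R_open (U n)) /\
    forall x, S x <-> (forall n, U n x).

Definition C_open (U : C -> Prop) : Prop :=
  forall z, U z -> exists e, 0 < e /\ forall w, Cmod (w - z) < e -> U w.
Definition dense_in (L S : C -> Prop) : Prop :=
  forall z e, L z -> 0 < e -> exists w, L w /\ S w /\ Cmod (w - z) < e.
Definition Gdelta_in (L S : C -> Prop) : Prop :=
  exists U : nat -> C -> Prop, (forall n, C_open (U n)) /\
    forall z, L z -> (S z <-> forall n, U n z).
Definition discrete_in (L S : C -> Prop) : Prop :=
  forall z, L z -> S z -> exists e, 0 < e /\
    forall w, L w -> S w -> Cmod (w - z) < e -> w = z.
Definition countable_in (L S : C -> Prop) : Prop :=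
  exists f : C -> nat, forall z w, L z -> S z -> L w -> S w -> f z = f w -> z = w.

(* Write sigma_lam(k) = tau + a1 xi + a2 eta - lam for the symbol of L_2 - lam.  If for some n
   every frequency |k| > n has |sigma_lam(k)| |k|^n >= 1, then L_2 - lam is GH; otherwise the
   indicator of a sequence of frequencies where |sigma_lam(k)| |k|^n < 1 with n -> oo is a
   non-smooth solution of a smooth equation.  Hence M_2 is a countable intersection of open sets.
   As Im a1 = (p/q) Im a2, Im sigma_lam(k) = (Im a2 / q)(p xi + q eta) - Im lam stays away from 0
   unless lam lies on a line l_m and p xi + q eta = m, i.e. xi = m u + q j, eta = m v - p j where
   u p + v q = 1.  There sigma_lam is real and equals tau + j theta + c_m - Re lam, with
   theta = q Re a1 - p Re a2.  For theta = pt/qt these values form a translate of qt^-1 Z, so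
   M_2 meets l_m in a lattice; for irrational theta, Z + theta Z is dense with arbitrarily large
   j (Kronecker), so each of the open sets is dense in l_m and Baire's theorem applies. *)

From Stdlib Require Import Reals ZArith Lra Lia Classical ClassicalEpsilon.
From Coquelicot Require Import Coquelicot.
From mathcomp Require Import ssreflect ssrbool eqtype ssrnat.
From mathcomp Require Import classical_sets reals Rstruct Rstruct_topology.
From mathcomp Require Import topology normedtype sequences.
Import numFieldNormedType.Exports.
Open Scope R_scope.

Lemma knorm_ge1 (k : Z3) : 1 <= knorm k.
Proof.
case: k => [[t x] y] /=.
have := Rabs_pos (IZR t); have := Rabs_pos (IZR x); have := Rabs_pos (IZR y); lra.
Qed.

Lemma knorm_pow_pos (k : Z3) (n : nat) : 0 < knorm k ^ n.
Proof. by apply: pow_lt; have := knorm_ge1 k; lra. Qed.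

Lemma finite_upper_bound (f : nat -> R) (N : nat) :
  exists B, forall i, (i < N)%N -> f i <= B.
Proof.
elim: N => [|N [B HB]]; first by exists 0.
exists (Rmax B (f N)) => i; rewrite ltnS leq_eqVlt => /orP [/eqP -> | /HB HiB].
- exact: Rmax_r.
- exact: Rle_trans _ _ _ HiB (Rmax_l _ _).
Qed.

Lemma exists_nat_gt (K : R) : exists n : nat, K < INR n.
Proof.
have [Hup _] := archimed (Rabs K); have K_abs := Rle_abs K; have abs_pos := Rabs_pos K.
exists (Z.to_nat (up (Rabs K))); rewrite INR_IZR_INZ Z2Nat.id; first lra.
by apply: le_IZR; lra.
Qed.

Lemma Rabs_IZR_ge1 (n : Z) : n <> 0%Z -> 1 <= Rabs (IZR n).
Proof. by move=> n_nz; rewrite -abs_IZR; apply: IZR_le; lia. Qed.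

Lemma im_le_Cmod (z : C) : Rabs (Im z) <= Cmod z.
Proof.
case: z => a b; have := re_le_Cmod (b, a); rewrite /Cmod /=.
by rewrite [b ^ 2 + _]Rplus_comm.
Qed.

Lemma C_ext (z w : C) : Re z = Re w -> Im z = Im w -> z = w.
Proof. by case: z w => [? ?] [? ?] /= -> ->. Qed.

Section Multiplier.

Variable s : Z3 -> C.

Definition small_at (n : nat) (k : Z3) : Prop :=
  INR n < knorm k /\ Cmod (s k) * knorm k ^ n < 1.

Lemma rapid_of_mul_lower_bound (c : R) (N : nat) (M : R) :
  0 < c -> (forall k, M < knorm k -> c <= Cmod (s k) * knorm k ^ N) ->
  forall u, temperate u -> rapid (fun k => (s k * u k)%C) -> rapid u.
Proof.
move=> c_pos Hs u [K [N0 Hu]] Hsu N'.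
have [K1 HK1] := Hsu (N + N')%nat.
exists (Rmax (K1 / c) (Rabs K * Rabs M ^ N0 * Rabs M ^ N')) => k.
have k1 := knorm_ge1 k; have uk_pos := Cmod_ge_0 (u k).
case: (Rlt_le_dec M (knorm k)) => [HM | HM].
- apply: Rle_trans _ _ _ _ (Rmax_l _ _).
  have := HK1 k; rewrite Cmod_mult pow_add => HK1k.
  apply: (Rmult_le_reg_r c) => //; have -> : K1 / c * c = K1 by field; lra.
  have : 0 <= Cmod (u k) * knorm k ^ N' by apply: Rmult_le_pos => //; apply: pow_le; lra.
  by have := Hs k HM; nra.
- apply: Rle_trans _ _ _ _ (Rmax_r _ _).
  have kM n : knorm k ^ n <= Rabs M ^ n.
    by apply: pow_incr; split; [lra | apply: Rle_trans _ _ _ HM (Rle_abs M)].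
  have K_pos : 0 <= K by have := Hu k; have := knorm_pow_pos k N0; nra.
  apply: Rmult_le_compat => //; first by apply: pow_le; lra.
  apply: Rle_trans _ _ _ (Hu k) _.
  by apply: Rmult_le_compat => //; [apply: pow_le; lra | exact: Rle_abs].
Qed.

Lemma not_rapid_of_small :
  (forall n, exists k, small_at n k) ->
  exists u, temperate u /\ rapid (fun k => (s k * u k)%C) /\ ~ rapid u.
Proof.
move=> /choice [g Hg].
pose u k := if excluded_middle_informative (exists n, k = g n) then RtoC 1 else RtoC 0.
have u_cases k : (exists n, k = g n /\ u k = RtoC 1) \/ u k = RtoC 0.
  rewrite /u; case: (excluded_middle_informative (exists n, k = g n)) => [[n Hn] | Hk].
  + by left; exists n.
  + by right.
have u_g n : u (g n) = RtoC 1.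
  by rewrite /u; case: (excluded_middle_informative _) => // - []; exists n.
exists u; split; [|split].
- exists 1, 0%N => k; case: (u_cases k) => [[n [_ ->]] | ->].
  + by rewrite Cmod_1 /=; lra.
  + by rewrite Cmod_0 /=; lra.
- move=> N; have [B HB] := finite_upper_bound (fun i => Cmod (s (g i)) * knorm (g i) ^ N) N.
  exists (Rmax 1 B) => k; rewrite Cmod_mult; case: (u_cases k) => [[n [-> ->]] | ->]; last first.
    by rewrite Cmod_0 Rmult_0_r Rmult_0_l; apply: Rle_trans _ _ _ Rle_0_1 (Rmax_l _ _).
  rewrite Cmod_1 Rmult_1_r; case: (ltnP n N) => [/HB HnB | /leP HNn].
  + exact: Rle_trans _ _ _ HnB (Rmax_r _ _).
  + apply: Rle_trans _ _ _ _ (Rmax_l _ _); have [_ Hn] := Hg n.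
    have := Rle_pow _ _ _ (knorm_ge1 (g n)) HNn; have := Cmod_ge_0 (s (g n)); nra.
- move=> /(_ 1%N) [K HK]; have [n Hn] := exists_nat_gt K.
  have [Hgn _] := Hg n; have := HK (g n); rewrite u_g Cmod_1 /=; lra.
Qed.

Lemma multiplier_hypoelliptic_iff :
  (forall u, temperate u -> rapid (fun k => (s k * u k)%C) -> rapid u) <->
  ~ (forall n, exists k, small_at n k).
Proof.
split.
- move=> Hhyp /not_rapid_of_small [u [Hu [Hsu Hnu]]]; exact: Hnu (Hhyp u Hu Hsu).
- move=> /not_all_ex_not [n Hn]; apply: (rapid_of_mul_lower_bound 1 n (INR n)); first lra.
  move=> k Hk; apply: Rnot_lt_le => Hlt; exact: Hn (ex_intro _ k (conj Hk Hlt)).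
Qed.

End Multiplier.

Section Symbol.

Variables a1 a2 : C.

Lemma Re_symbolL2 lam t x y :
  Re (symbolL2 a1 a2 lam (t, x, y)) = IZR t + Re a1 * IZR x + Re a2 * IZR y - Re lam.
Proof. by case: a1 a2 lam => [? ?] [? ?] [? ?] /=; ring. Qed.

Lemma Im_symbolL2 lam t x y :
  Im (symbolL2 a1 a2 lam (t, x, y)) = Im a1 * IZR x + Im a2 * IZR y - Im lam.
Proof. by case: a1 a2 lam => [? ?] [? ?] [? ?] /=; ring. Qed.

Lemma symbolL2_sub w lam k : symbolL2 a1 a2 w k = (symbolL2 a1 a2 lam k - (w - lam))%C.
Proof.
case: k => [[t x] y]; case: a1 a2 lam w => [? ?] [? ?] [? ?] [? ?].
by rewrite /symbolL2 /Cminus /Cplus /Copp /Cmult /=; f_equal; ring.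
Qed.

Definition M2_approx (n : nat) (lam : C) : Prop :=
  exists k, small_at (symbolL2 a1 a2 lam) n k.

Lemma M2_iff lam : M2 a1 a2 lam <-> forall n, M2_approx n lam.
Proof.
rewrite /M2 /GH_L2 multiplier_hypoelliptic_iff.
by split => [/NNPP | H]; last by move=> /(_ H).
Qed.

Lemma M2_approx_open n : C_open (M2_approx n).
Proof.
move=> lam [k [Hk Hsmall]]; have Pk := knorm_pow_pos k n.
exists ((1 - Cmod (symbolL2 a1 a2 lam k) * knorm k ^ n) / knorm k ^ n); split.
  by apply: Rdiv_lt_0_compat; lra.
move=> w Hw; exists k; split=> //; rewrite (symbolL2_sub w lam).
have tri : Cmod (symbolL2 a1 a2 lam k - (w - lam)) <= Cmod (symbolL2 a1 a2 lam k) + Cmod (w - lam).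
  by rewrite -(Cmod_opp (w - lam)); exact: Cmod_triangle.
have {}Hw : Cmod (w - lam) * knorm k ^ n < 1 - Cmod (symbolL2 a1 a2 lam k) * knorm k ^ n.
  by move: Hw; rewrite /Rdiv; move/(Rmult_lt_compat_r _ _ _ Pk); rewrite Rmult_assoc Rinv_l; lra.
have := Rmult_le_compat_r _ _ _ (Rlt_le _ _ Pk) tri; lra.
Qed.

Lemma M2_approx_of_zero n lam k :
  INR n < knorm k -> symbolL2 a1 a2 lam k = RtoC 0 -> M2_approx n lam.
Proof. by move=> Hk H0; exists k; split=> //; rewrite H0 Cmod_0 Rmult_0_l; lra. Qed.

Lemma GH_L2_of_lower_bound lam c :
  0 < c -> (forall k, c <= Cmod (symbolL2 a1 a2 lam k)) -> GH_L2 a1 a2 lam.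
Proof.
move=> c0 Hc; apply: (rapid_of_mul_lower_bound _ c 0 0) => // k _.
by rewrite /= Rmult_1_r.
Qed.

Lemma M2_Gdelta_in (L : C -> Prop) : Gdelta_in L (M2 a1 a2).
Proof. by exists M2_approx; split=> [n | z _]; [exact: M2_approx_open | exact: M2_iff]. Qed.

Lemma N2_Gdelta : R_Gdelta (N2 a1 a2).
Proof.
exists (fun n s => M2_approx n (RtoC s)); split=> [n s Hs | s]; last exact: M2_iff.
have [e [e_pos He]] := M2_approx_open n _ Hs.
exists e; split=> // y Hy; apply: He.
have -> : (RtoC y - RtoC s)%C = RtoC (y - s) by apply: C_ext => /=; ring.
by rewrite Cmod_R.
Qed.

End Symbol.

Lemma noninteger_dist_Z (d : R) :
  (forall n : Z, d <> IZR n) -> exists delta, 0 < delta /\ forall n : Z, delta <= Rabs (IZR n - d).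
Proof.
move=> Hd; have [Hfl Hfl1] := Zfloor_bound d; set F := Zfloor d in Hfl Hfl1.
have HFd : IZR F < d by case: Hfl => // HF; case: (Hd F).
exists (Rmin (d - IZR F) (IZR F + 1 - d)); split; first by apply: Rmin_pos; lra.
have := Rmin_l (d - IZR F) (IZR F + 1 - d); have := Rmin_r (d - IZR F) (IZR F + 1 - d).
move=> Hr Hl n; case: (Z.le_gt_cases n F) => [/IZR_le Hn | Hn].
- by rewrite Rabs_left1; lra.
- have : IZR (F + 1) <= IZR n by apply: IZR_le; lia.
  by rewrite plus_IZR => HnF; rewrite Rabs_right; lra.
Qed.

Section AdditiveSubgroup.

Variable G : R -> Prop.
Hypothesis G_sub : forall x y, G x -> G y -> G (x - y).

Lemma subgroup_Zmul x : G x -> forall n : Z, G (IZR n * x).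
Proof.
move=> Gx.
have G0 : G 0 by rewrite -(Rminus_diag x); exact: G_sub.
have Gnat m : G (INR m * x).
  elim: m => [|m IHm]; first by rewrite Rmult_0_l.
  have -> : INR m.+1 * x = INR m * x - (0 - x) by rewrite S_INR; ring.
  by apply: (G_sub) => //; exact: G_sub.
move=> n; case: (Z_le_gt_dec 0 n) => Hn.
- by rewrite -(Z2Nat.id n) // -INR_IZR_INZ; exact: Gnat.
- have -> : IZR n * x = 0 - INR (Z.to_nat (- n)) * x.
    by rewrite INR_IZR_INZ Z2Nat.id ?opp_IZR; [ring | lia].
  exact: G_sub.
Qed.

Lemma subgroup_least_pos eps x0 :
  0 < eps -> (forall x, G x -> 0 < x -> eps <= x) -> G x0 -> 0 < x0 ->
  exists a, G a /\ 0 < a /\ forall x, G x -> 0 < x -> a <= x.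
Proof.
move=> eps_pos Heps Gx0 x0_pos.
pose E y := exists x, G x /\ 0 < x /\ y = - x.
have [s [s_ub s_lub]] : {s | is_lub E s}.
  apply: completeness; last by exists (- x0), x0.
  by exists (- eps) => _ [x [Gx [x_pos ->]]]; have := Heps x Gx x_pos; lra.
have s_low x : G x -> 0 < x -> - s <= x.
  move=> Gx x_pos; have : E (- x) by exists x.
  by move/s_ub; lra.
have s_approx eta : 0 < eta -> exists x, G x /\ 0 < x < - s + eta.
  move=> eta_pos; apply: NNPP => Hn.
  suff : s <= s - eta by lra.
  apply: s_lub => _ [x [Gx [x_pos ->]]]; apply: Rnot_lt_le => Hlt.
  by apply: Hn; exists x; split=> //; lra.
have eps_s : eps <= - s.
  suff : s <= - eps by lra.
  by apply: s_lub => _ [x [Gx [x_pos ->]]]; have := Heps x Gx x_pos; lra.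
exists (- s); split; last by split=> //; lra.
apply: NNPP => Hns.
have above x : G x -> 0 < x -> - s < x.
  by move=> Gx x_pos; case: (s_low x Gx x_pos) => // Hx; rewrite Hx in Hns.
(* two elements of G in ]-s, -2s[ would have a difference in ]0, -s[ *)
have [x1 [Gx1 [x1_pos x1_lt]]] := s_approx (- s) ltac:(lra).
have [x2 [Gx2 [x2_pos x2_lt]]] := s_approx (x1 + s) ltac:(have := above x1 Gx1 x1_pos; lra).
have := above x2 Gx2 x2_pos; have := s_low (x1 - x2) (G_sub _ _ Gx1 Gx2); lra.
Qed.

Lemma subgroup_cyclic_of_least_pos a :
  G a -> 0 < a -> (forall x, G x -> 0 < x -> a <= x) ->
  forall x, G x -> exists n : Z, x = IZR n * a.
Proof.
move=> Ga a_pos a_least x Gx; exists (Zfloor (x / a)).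
have [Hfl Hfl1] := Zfloor_bound (x / a).
have Gr := G_sub _ _ Gx (subgroup_Zmul _ Ga (Zfloor (x / a))).
have x_eq : x = x / a * a by field; lra.
have : 0 <= x - IZR (Zfloor (x / a)) * a < a by split; nra.
case=> [[r_pos | r_zero] r_lt]; last lra.
by have := a_least _ Gr r_pos; lra.
Qed.

Lemma subgroup_dense_or_cyclic :
  (exists x0, G x0 /\ 0 < x0) ->
  (forall eps, 0 < eps -> exists x, G x /\ 0 < x < eps) \/
  (exists a, 0 < a /\ forall x, G x -> exists n : Z, x = IZR n * a).
Proof.
move=> [x0 [Gx0 x0_pos]].
case: (classic (forall eps, 0 < eps -> exists x, G x /\ 0 < x < eps)) => [|Hsmall]; first by left.
right.
have [eps Heps_not] := not_all_ex_not _ _ Hsmall.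
have [eps_pos Hno] := imply_to_and _ _ Heps_not.
have Heps x : G x -> 0 < x -> eps <= x.
  by move=> Gx x_pos; apply: Rnot_lt_le => x_lt; apply: Hno; exists x.
have [a [Ga [a_pos a_least]]] := subgroup_least_pos eps x0 eps_pos Heps Gx0 x0_pos.
by exists a; split=> //; exact: subgroup_cyclic_of_least_pos.
Qed.

End AdditiveSubgroup.

Definition irrational (x : R) : Prop := forall a b : Z, b <> 0%Z -> x <> IZR a / IZR b.

Lemma irrational_small_Z_combination th :
  irrational th -> forall eps, 0 < eps -> exists t j : Z, 0 < IZR t + IZR j * th < eps.
Proof.
move=> th_irr.
pose G x := exists t j : Z, x = IZR t + IZR j * th.
have Gsub x y : G x -> G y -> G (x - y).
  by case=> t [j ->] [t' [j' ->]]; exists (t - t')%Z, (j - j')%Z; rewrite !minus_IZR; ring.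
have G1 : G 1 by exists 1%Z, 0%Z; ring.
have Gth : G th by exists 0%Z, 1%Z; ring.
case: (subgroup_dense_or_cyclic G Gsub (ex_intro _ 1 (conj G1 Rlt_0_1))).
- by move=> Hsmall eps /Hsmall [_ [[t [j ->]] Hx]]; exists t, j.
- move=> [a [a_pos Ha]]; have [n1 H1] := Ha 1 G1; have [n2 H2] := Ha th Gth.
  have n1_nz : n1 <> 0%Z by move=> n1_0; rewrite n1_0 Rmult_0_l in H1; lra.
  have n1R : IZR n1 <> 0 by apply: not_0_IZR.
  case: (th_irr n2 n1 n1_nz); rewrite H2 /Rdiv; congr Rmult.
  by apply: (Rmult_eq_reg_l (IZR n1)) => //; rewrite Rinv_r.
Qed.

Lemma irrational_Z_combinations_dense th :
  irrational th -> forall X eps M, 0 < eps ->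
  exists t j : Z, M < Rabs (IZR j) /\ Rabs (IZR t + IZR j * th - X) < eps.
Proof.
move=> th_irr X eps M eps_pos.
have [HK _] := archimed (Rabs M); set K := up (Rabs M) in HK.
have M_le := Rle_abs M; have M_abs := Rabs_pos M.
have K_pos : (0 < K)%Z by apply: lt_IZR; lra.
have [t' [j' [g_pos g_lt]]] :=
  irrational_small_Z_combination th th_irr (Rmin (eps / (IZR K + 1)) 1)
    ltac:(apply: Rmin_pos; [apply: Rdiv_lt_0_compat |]; lra).
set g := IZR t' + IZR j' * th in g_pos g_lt.
have g_eps : (IZR K + 1) * g < eps.
  have := Rmin_l (eps / (IZR K + 1)) 1 => g_min.
  have : (IZR K + 1) * g < (IZR K + 1) * (eps / (IZR K + 1)) by apply: Rmult_lt_compat_l; lra.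
  by have -> : (IZR K + 1) * (eps / (IZR K + 1)) = eps by field; lra.
have j'_ge1 : 1 <= Rabs (IZR j').
  rewrite -abs_IZR; apply: IZR_le; case: (Z.eq_dec j' 0) => [j'0 | ]; last lia.
  have := Rmin_r (eps / (IZR K + 1)) 1.
  rewrite /g j'0 Rmult_0_l Rplus_0_r in g_pos g_lt => g_1.
  have : (0 < t')%Z by apply: lt_IZR.
  have : (t' < 1)%Z by apply: lt_IZR; lra.
  lia.
have [Hfl Hfl1] := Zfloor_bound (X / g); set N0 := Zfloor (X / g) in Hfl Hfl1.
have X_eq : X = X / g * g by field; lra.
have [N [HN_ge HN_dist]] : exists N : Z, (K <= Z.abs N)%Z /\ Z.abs (N - N0) = K.
  by case: (Z_le_gt_dec 0 N0) => H; [exists (N0 + K)%Z | exists (N0 - K)%Z]; lia.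
exists (N * t')%Z, (N * j')%Z; split.
- rewrite mult_IZR Rabs_mult -abs_IZR.
  have := IZR_le _ _ HN_ge; nra.
- have -> : IZR (N * t') + IZR (N * j') * th - X = IZR (N - N0) * g + (IZR N0 * g - X).
    by rewrite minus_IZR !mult_IZR /g; ring.
  apply: Rle_lt_trans _ _ _ (Rabs_triang _ _) _.
  rewrite Rabs_mult -abs_IZR HN_dist Rabs_right; last by lra.
  rewrite Rabs_left1; nra.
Qed.

Lemma R_ballE (x e y : R) : @ball _ (R : realType) x e y <-> Rabs (x - y) < e.
Proof. by rewrite /ball /=; split => /RltP. Qed.

Lemma open_of_R_open (U : R -> Prop) : R_open U -> @open (R : realType) U.
Proof.
move=> oU; rewrite openE => x /oU [e [e0 He]]; apply/nbhs_ballP.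
exists e; first by apply/RltP.
by move=> y /R_ballE Hy; apply: He; rewrite Rabs_minus_sym.
Qed.

Lemma dense_of_R_dense (S : R -> Prop) : R_dense S -> @dense (R : realType) S.
Proof.
move=> dS O [x Ox]; rewrite openE => /(_ x Ox) /nbhs_ballP [e /RltP e0 He].
have [y [Sy Hy]] := dS x e e0.
by exists y; split=> //; apply: He; apply/R_ballE; rewrite Rabs_minus_sym.
Qed.

Lemma R_dense_of_dense (S : R -> Prop) : @dense (R : realType) S -> R_dense S.
Proof.
move=> dS x e e0.
have ball_x : (@ball _ (R : realType) x e !=set0)%classic.
  by exists x; apply/R_ballE; rewrite Rminus_diag Rabs_R0.
have [y [Hy Sy]] := dS _ ball_x (@ball_open _ (R : realType) x e).
by exists y; split=> //; rewrite Rabs_minus_sym; apply/R_ballE.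
Qed.

Lemma R_dense_bigcap (W : nat -> R -> Prop) :
  (forall n, R_open (W n)) -> (forall n, R_dense (W n)) -> R_dense (fun x => forall n, W n x).
Proof.
move=> oW dW x e e0.
have W_open_dense n := conj (open_of_R_open _ (oW n)) (dense_of_R_dense _ (dW n)).
have [y [Wy Hy]] := R_dense_of_dense _ (Baire W_open_dense) x e e0.
by exists y; split=> // n; apply: Wy.
Qed.

Lemma discrete_countable_of_Re_lattice (L S : C -> Prop) (A B c : R) :
  0 < A -> (forall z, L z -> Im z = c) ->
  (forall z, L z -> S z -> exists n : Z, A * Re z - B = IZR n) ->
  discrete_in L S /\ countable_in L S.
Proof.
move=> A_pos L_Im S_lattice.
have same_index z w n : L z -> L w -> A * Re z - B = IZR n -> A * Re w - B = IZR n -> w = z.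
  move=> Lz Lw Hz Hw; apply: C_ext; last by rewrite !L_Im.
  by apply: (Rmult_eq_reg_l A); lra.
split.
- move=> z Lz Sz; exists (/ A); split; first exact: Rinv_0_lt_compat.
  move=> w Lw Sw Hwz; have [nz Hz] := S_lattice z Lz Sz; have [nw Hw] := S_lattice w Lw Sw.
  have Hre : Rabs (Re w - Re z) <= Cmod (w - z) := re_le_Cmod (w - z).
  have Hdiff : IZR (nw - nz) = A * (Re w - Re z) by rewrite minus_IZR -Hz -Hw; ring.
  have small : Rabs (IZR (nw - nz)) < 1.
    rewrite Hdiff Rabs_mult (Rabs_right A); last by lra.
    have := Rmult_le_compat_l A _ _ (Rlt_le _ _ A_pos) Hre.
    by have := Rmult_lt_compat_l _ _ _ A_pos Hwz; rewrite Rinv_r; lra.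
  case: (Z.eq_dec nw nz) => [Hn | Hn]; first by rewrite Hn in Hw; exact: (same_index z w nz).
  by have := Rabs_IZR_ge1 (nw - nz) ltac:(lia); lra.
- exists (fun z => Z.to_nat (Z.abs (4 * Zfloor (A * Re z - B) + 1))).
  move=> z w Lz Sz Lw Sw; have [nz Hz] := S_lattice z Lz Sz; have [nw Hw] := S_lattice w Lw Sw.
  rewrite Hz Hw !ZfloorZ => Hzw; symmetry; apply: (same_index z w nz) => //.
  by have -> : nz = nw by lia.
Qed.

Section Resonance.

Variables (a1 a2 : C) (p q u v : Z).
Hypotheses (Ha2 : Im a2 <> 0) (q_pos : (0 < q)%Z) (uv_bezout : (u * p + v * q = 1)%Z)
  (Im_ratio : Im a1 / Im a2 = IZR p / IZR q).

Local Notation theta := (IZR q * Re a1 - IZR p * Re a2).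

Definition line_point (m : Z) (s : R) : C := (s, IZR m * Im a2 / IZR q).

Definition resonant_freq (m t j : Z) : Z3 := (t, (m * u + q * j)%Z, (m * v - p * j)%Z).

Definition resonance_offset (m : Z) : R := IZR m * (IZR u * Re a1 + IZR v * Re a2).

Let qR_pos : 0 < IZR q.
Proof. exact: IZR_lt. Qed.

Let qR_neq0 : IZR q <> 0.
Proof. by apply: not_0_IZR; lia. Qed.

Lemma Im_a1 : Im a1 = Im a2 * IZR p / IZR q.
Proof.
have -> : Im a1 = Im a1 / Im a2 * Im a2 by field.
by rewrite Im_ratio; field.
Qed.

Lemma Im_symbolL2_ratio lam t x y :
  Im (symbolL2 a1 a2 lam (t, x, y)) = Im a2 / IZR q * IZR (p * x + q * y) - Im lam.
Proof. by rewrite Im_symbolL2 Im_a1 plus_IZR !mult_IZR; field. Qed.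

Lemma line_point_Re m lam : line_l a2 q m lam -> lam = line_point m (Re lam).
Proof. by case: lam => x y; rewrite /line_l /line_point /= => ->. Qed.

Lemma line_point_sub m y s : (line_point m y - line_point m s)%C = RtoC (y - s).
Proof. by apply: C_ext => /=; ring. Qed.

Lemma symbolL2_resonant m s t j :
  symbolL2 a1 a2 (line_point m s) (resonant_freq m t j) =
  RtoC (IZR t + IZR j * theta + resonance_offset m - s).
Proof.
apply: C_ext.
- by rewrite Re_symbolL2 /resonance_offset /= plus_IZR minus_IZR !mult_IZR; ring.
- rewrite Im_symbolL2_ratio /=.
  have -> : (p * (m * u + q * j) + q * (m * v - p * j) = m * (u * p + v * q))%Z by ring.
  by rewrite uv_bezout Z.mul_1_r; field.
Qed.

Lemma knorm_resonant m t j :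
  Rabs (IZR j) < knorm (resonant_freq m t j) + Rabs (IZR (m * u)).
Proof.
rewrite /resonant_freq /knorm.
have : Rabs (IZR j) <= Rabs (IZR (m * u + q * j)) + Rabs (IZR (m * u)).
  rewrite -!abs_IZR -plus_IZR; apply: IZR_le; nia.
have := Rabs_pos (IZR t); have := Rabs_pos (IZR (m * v - p * j)); lra.
Qed.

Lemma symbolL2_line_cases m s k :
  Rabs (Im a2) / IZR q <= Cmod (symbolL2 a1 a2 (line_point m s) k) \/
  exists t j, k = resonant_freq m t j.
Proof.
case: k => [[t x] y]; case: (Z.eq_dec (p * x + q * y) m) => [Hm | Hm].
  right; exists t, (v * (x - m * u) - u * (y - m * v))%Z.
  have Ex : (x - (m * u + q * (v * (x - m * u) - u * (y - m * v))) =
             u * (p * x + q * y - m) + (1 - (u * p + v * q)) * x)%Z by ring.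
  have Ey : (y - (m * v - p * (v * (x - m * u) - u * (y - m * v))) =
             v * (p * x + q * y - m) + (1 - (u * p + v * q)) * y)%Z by ring.
  rewrite Hm uv_bezout Z.sub_diag Z.mul_0_r Z.mul_0_l in Ex Ey.
  by rewrite /resonant_freq; congr (_, _, _); lia.
left; apply: Rle_trans _ _ _ _ (im_le_Cmod _).
rewrite Im_symbolL2_ratio /=.
have -> : Im a2 / IZR q * IZR (p * x + q * y) - IZR m * Im a2 / IZR q =
          Im a2 / IZR q * IZR (p * x + q * y - m) by rewrite minus_IZR; field.
rewrite Rabs_mult /Rdiv Rabs_mult Rabs_inv (Rabs_right (IZR q)); last by lra.
have := Rabs_IZR_ge1 (p * x + q * y - m) ltac:(lia).
have : 0 <= Rabs (Im a2) * / IZR q by apply: Rmult_le_pos; [exact: Rabs_pos | apply: Rlt_le; exact: Rinv_0_lt_compat].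
nra.
Qed.

Lemma RtoC_line_point r : RtoC r = line_point 0 r.
Proof. by rewrite /line_point /Rdiv !Rmult_0_l. Qed.

Lemma R_open_line_point m (U : C -> Prop) : C_open U -> R_open (fun s => U (line_point m s)).
Proof.
move=> U_open s /U_open [e [e_pos He]]; exists e; split=> // y Hy.
by apply: He; rewrite line_point_sub Cmod_R.
Qed.

Lemma Im_a2_q_pos : 0 < Rabs (Im a2) / IZR q.
Proof. by apply: Rdiv_lt_0_compat => //; apply: Rabs_pos_lt. Qed.

Lemma M2_subset_lines lam : M2 a1 a2 lam -> exists m : Z, line_l a2 q m lam.
Proof.
move=> HM; apply: NNPP => Hlines; apply: HM.
have [delta [delta_pos Hdelta]] : exists delta, 0 < delta /\
    forall n : Z, delta <= Rabs (IZR n - Im lam * IZR q / Im a2).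
  apply: noninteger_dist_Z => n Hn; apply: Hlines; exists n.
  by rewrite /line_l -Hn; field.
apply: (GH_L2_of_lower_bound _ _ _ (Rabs (Im a2) / IZR q * delta)).
  exact: Rmult_lt_0_compat Im_a2_q_pos delta_pos.
case=> [[t x] y]; apply: Rle_trans _ _ _ _ (im_le_Cmod _).
have -> : Im (symbolL2 a1 a2 lam (t, x, y)) =
          Im a2 / IZR q * (IZR (p * x + q * y) - Im lam * IZR q / Im a2).
  by rewrite Im_symbolL2_ratio; field.
rewrite Rabs_mult /Rdiv Rabs_mult Rabs_inv (Rabs_right (IZR q)); last by lra.
by apply: Rmult_le_compat_l; [exact: Rlt_le Im_a2_q_pos | exact: Hdelta].
Qed.

Section RationalSlope.

Variables pt qt : Z.
Hypotheses (qt_pos : (0 < qt)%Z) (ptqt_coprime : Z.gcd pt qt = 1%Z)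
  (theta_rat : theta = IZR pt / IZR qt).

Let qtR_pos : 0 < IZR qt.
Proof. exact: IZR_lt. Qed.

Lemma M2_line_point_lattice m s :
  M2 a1 a2 (line_point m s) -> exists n : Z, IZR qt * (s - resonance_offset m) = IZR n.
Proof.
move=> HM; apply: NNPP => Hnint; apply: HM.
have [delta [delta_pos Hdelta]] :=
  noninteger_dist_Z (IZR qt * (s - resonance_offset m)) (fun n Hn => Hnint (ex_intro _ n Hn)).
apply: (GH_L2_of_lower_bound _ _ _ (Rmin (Rabs (Im a2) / IZR q) (delta / IZR qt))).
  by apply: Rmin_pos; [exact: Im_a2_q_pos | exact: Rdiv_lt_0_compat].
move=> k; case: (symbolL2_line_cases m s k) => [Hk | [t [j ->]]].
  exact: Rle_trans _ _ _ (Rmin_l _ _) Hk.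
apply: Rle_trans _ _ _ (Rmin_r _ _) _; rewrite symbolL2_resonant Cmod_R theta_rat.
have -> : IZR t + IZR j * (IZR pt / IZR qt) + resonance_offset m - s =
          (IZR (qt * t + pt * j) - IZR qt * (s - resonance_offset m)) / IZR qt.
  by rewrite plus_IZR !mult_IZR; field; lra.
rewrite Rabs_div; last by lra.
rewrite (Rabs_right (IZR qt)); last by lra.
by apply: Rmult_le_compat_r; [apply: Rlt_le; exact: Rinv_0_lt_compat | exact: Hdelta].
Qed.

Lemma M2_line_point_of_lattice m s n :
  IZR qt * (s - resonance_offset m) = IZR n -> M2 a1 a2 (line_point m s).
Proof.
move=> Hn; have [u' [v' uv'_bezout]] := Z.gcd_bezout _ _ _ ptqt_coprime.
apply/M2_iff => N.
have [HJ _] := archimed (INR N + Rabs (IZR (m * u)) + Rabs (IZR (n * u'))).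
set J := up _ in HJ.
pose j := (n * u' + qt * J)%Z; pose t := (n * v' - pt * J)%Z.
apply: (M2_approx_of_zero _ _ _ _ (resonant_freq m t j)).
  have : IZR J - Rabs (IZR (n * u')) <= Rabs (IZR j).
    by rewrite -!abs_IZR -minus_IZR; apply: IZR_le; rewrite /j; nia.
  by have := knorm_resonant m t j; lra.
have tj : (qt * t + pt * j = n)%Z.
  by rewrite /t /j -[in RHS](Z.mul_1_r n) -uv'_bezout; ring.
have tjR := f_equal IZR tj; rewrite plus_IZR !mult_IZR in tjR.
rewrite symbolL2_resonant theta_rat; apply: C_ext => //=.
have -> : IZR t + IZR j * (IZR pt / IZR qt) + resonance_offset m - s =
          (IZR qt * IZR t + IZR pt * IZR j - IZR qt * (s - resonance_offset m)) / IZR qt.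
  by field; lra.
by rewrite tjR Hn Rminus_diag /Rdiv Rmult_0_l.
Qed.

Lemma M2_line_point_rational m s :
  M2 a1 a2 (line_point m s) <-> exists n : Z, IZR qt * (s - resonance_offset m) = IZR n.
Proof.
by split=> [/M2_line_point_lattice | [n /M2_line_point_of_lattice]].
Qed.

Lemma N2_rational r : N2 a1 a2 r <-> exists n : Z, r = IZR n / IZR qt.
Proof.
rewrite /N2 RtoC_line_point M2_line_point_rational /resonance_offset Rmult_0_l Rminus_0_r.
by split=> [[n Hn] | [n ->]]; exists n; [rewrite -Hn | ]; field; lra.
Qed.

Lemma M2_line_discrete_countable m :
  discrete_in (line_l a2 q m) (M2 a1 a2) /\ countable_in (line_l a2 q m) (M2 a1 a2).
Proof.
apply: (discrete_countable_of_Re_lattice _ _ (IZR qt) (IZR qt * resonance_offset m)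
          (IZR m * Im a2 / IZR q)) => // z Lz.
rewrite (line_point_Re m z Lz) M2_line_point_rational => - [n Hn].
by exists n; rewrite -Hn /=; ring.
Qed.

End RationalSlope.

Section IrrationalSlope.

Hypothesis theta_irr : irrational theta.

Lemma M2_approx_line_dense m n : R_dense (fun s => M2_approx a1 a2 n (line_point m s)).
Proof.
move=> X e e_pos.
have [t [j [Hj Hclose]]] := irrational_Z_combinations_dense theta theta_irr
  (X - resonance_offset m) e (INR n + Rabs (IZR (m * u))) e_pos.
exists (IZR t + IZR j * theta + resonance_offset m); split.
- apply: (M2_approx_of_zero _ _ _ _ (resonant_freq m t j)).
    by have := knorm_resonant m t j; lra.
  by rewrite symbolL2_resonant Rminus_diag.
- by have -> : IZR t + IZR j * theta + resonance_offset m - X =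
               IZR t + IZR j * theta - (X - resonance_offset m) by ring.
Qed.

Lemma M2_line_dense m : R_dense (fun s => M2 a1 a2 (line_point m s)).
Proof.
have M2_approx_line_open n := R_open_line_point m _ (M2_approx_open a1 a2 n).
move=> x e e_pos.
have [s [Ms Hs]] := R_dense_bigcap _ M2_approx_line_open (M2_approx_line_dense m) x e e_pos.
by exists s; split=> //; apply/M2_iff.
Qed.

Lemma M2_dense_in_line m : dense_in (line_l a2 q m) (M2 a1 a2).
Proof.
move=> z e Lz e_pos; have [s [Ms Hs]] := M2_line_dense m (Re z) e e_pos.
exists (line_point m s); split=> //; split=> //.
by rewrite {1}(line_point_Re m z Lz) line_point_sub Cmod_R.
Qed.

Lemma N2_dense : R_dense (N2 a1 a2).
Proof.
move=> x e e_pos; have [s [Ms Hs]] := M2_line_dense 0 x e e_pos.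
by exists s; rewrite /N2 RtoC_line_point.
Qed.

End IrrationalSlope.

End Resonance.

Theorem proposition2p9 (a1 a2 : C) (p q : Z) :
  Im a1 <> 0 -> Im a2 <> 0 ->
  p <> 0%Z -> (0 < q)%Z -> Z.gcd p q = 1%Z ->
  Im a1 / Im a2 = IZR p / IZR q ->
  (forall lam, M2 a1 a2 lam -> exists m : Z, line_l a2 q m lam) /\
  (forall pt qt : Z, (0 < qt)%Z -> Z.gcd pt qt = 1%Z ->
     IZR q * Re a1 - IZR p * Re a2 = IZR pt / IZR qt ->
     (forall r, N2 a1 a2 r <-> exists n : Z, r = IZR n / IZR qt) /\
     (forall m : Z, discrete_in (line_l a2 q m) (M2 a1 a2) /\
                    countable_in (line_l a2 q m) (M2 a1 a2))) /\
  ((forall a b : Z, b <> 0%Z -> IZR q * Re a1 - IZR p * Re a2 <> IZR a / IZR b) ->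
     (R_dense (N2 a1 a2) /\ R_Gdelta (N2 a1 a2)) /\
     (forall m : Z, dense_in (line_l a2 q m) (M2 a1 a2) /\
                    Gdelta_in (line_l a2 q m) (M2 a1 a2))).
Proof.
move=> _ Ha2 _ q_pos /Z.gcd_bezout [u [v uv_bezout]] Im_ratio.
split; [|split].
- exact: (M2_subset_lines a1 a2 p).
- move=> pt qt qt_pos ptqt_coprime theta_rat.
  split=> [r | m].
  + exact: (N2_rational a1 a2 p q u v Ha2 q_pos uv_bezout Im_ratio pt qt).
  + exact: (M2_line_discrete_countable a1 a2 p q u v Ha2 q_pos uv_bezout Im_ratio pt qt).
- move=> theta_irr; split; [split | move=> m; split].
  + exact: (N2_dense a1 a2 p q u v).
  + exact: N2_Gdelta.
  + exact: (M2_dense_in_line a1 a2 p q u v).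
  + exact: M2_Gdelta_in.
Qed.
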